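(* If condition $(C_k)$ holds for some $k\in I_n$, then every equilibrium $u$ of the system lying in $\pi_k$ satisfies $\alpha_ku<1$.
   Context: Fix $n\ge 2$ and $I_m=\{1,\dots,m\}$. Consider the Lotka–Volterra system $x_i'=b_ix_i(1-\alpha_ix)$, $i\in I_n$, where $b_i>0$, $\alpha_i=(a_{i1},\dots,a_{in})$ with $a_{ii}>0$ and $a_{ij}\ge 0$, on $\mathbb{R}^n_+$. For $u\le v$ (componentwise), $[u,v]=\{x\in\mathbb{R}^n_+:u\le x\le v\}$. For $J\subset I_n$, $u^J_i=u_i$ for $i\in J$ and $0$ otherwise. $\pi_i=\{x\in\mathbb{R}^n_+:x_i=0\}$, $\gamma_i=\{x\in\mathbb{R}^n_+:\alpha_ix=1\}$. Define $U$ componentwise by: $U_i=a_{ii}^{-1}$ if $a_{ii}\le a_{ji}$ or $a_{ij}=0$ for some $j\ne i$; otherwise $U_i=0$ if $a_{ji}<a_{ii}$ and $a_{jk}\le a_{ik}$ for all $j,k\in I_n\setminus\{i\}$; otherwise $U_i=\max\{\frac{a_{kj}-a_{ij}}{a_{ii}a_{kj}-a_{ij}a_{ki}}: j,k\in I_n\setminus\{i\},\ a_{kj}>a_{ij}\}$. Condition $(C_k)$: either $\alpha_kU^{I_n\setminus\{k\}}<1$, or every $x\in\gamma_k\cap[0,U^{I_n\setminus\{k\}}]$ satisfies $\alpha_jx>1$ for all $j\in I_n\setminus\{k\}$. *)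

(* the statement is purely algebraic/order-theoretic, so we
   state it over an arbitrary real field R (this includes the real numbers). *)
From HB Require Import structures.
From mathcomp Require Import all_boot all_order all_algebra.
Set Implicit Arguments. Unset Strict Implicit. Unset Printing Implicit Defensive.
Import Order.TTheory GRing.Theory Num.Theory.
Local Open Scope ring_scope.

Section LV.
Variables (R : realFieldType) (n : nat).
Variable A : 'I_n -> 'I_n -> R.

Definition alphax (i : 'I_n) (x : 'I_n -> R) : R := \sum_(j < n) A i j * x j.

Definition nonneg (x : 'I_n -> R) : Prop := forall i, 0 <= x i.

Definition in_box (u v x : 'I_n -> R) : Prop :=
  nonneg x /\ (forall i, u i <= x i /\ x i <= v i).

Definition restr (J : pred 'I_n) (u : 'I_n -> R) : 'I_n -> R :=
  fun i => if J i then u i else 0.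

Definition maxseq (s : seq R) : R := \big[Num.max/head 0 s]_(x <- s) x.

Definition Ucomp (i : 'I_n) : R :=
  if [exists j, (j != i) && ((A i i <= A j i) || (A i j == 0))] then (A i i)^-1
  else if [forall j, (j != i) ==> (A j i < A i i)] &&
          [forall j, forall k, ((j != i) && (k != i)) ==> (A j k <= A i k)]
  then 0
  else maxseq [seq let j := jk.1 in let k := jk.2 in
                    (A k j - A i j) / (A i i * A k j - A i j * A k i)
              | jk <- enum [pred jk : 'I_n * 'I_n |
                             (jk.1 != i) && (jk.2 != i) && (A i jk.1 < A jk.2 jk.1)]].

Definition U : 'I_n -> R := Ucomp.

Definition cond_C (k : 'I_n) : Prop :=
  let W := restr (fun i => i != k) U in
  alphax k W < 1 \/
  (forall x, nonneg x -> alphax k x = 1 -> in_box (fun _ => 0) W x ->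
     forall j, j != k -> 1 < alphax j x).

(* equilibrium of x_i' = b_i x_i (1 - alpha_i x) in R^n_+ *)
Definition equilibrium (b : 'I_n -> R) (u : 'I_n -> R) : Prop :=
  nonneg u /\ forall i, b i * u i * (1 - alphax i u) = 0.
End LV.

(* Let u be an equilibrium with u_k = 0 and suppose, towards a contradiction,
   that alpha_k u >= 1.  The heart of the proof is the a-priori bound
   u_i <= U_i for every i <> k (lemma [equilibrium_le_U]); it is obtained by
   following the three branches of the definition of U_i:
   - U_i = 1/a_ii: a_ii u_i <= alpha_i u = 1 whenever u_i > 0;
   - U_i = 0: every coordinate of row k is dominated by row i, so
     alpha_k u < alpha_i u = 1 unless u_i = 0;
   - otherwise column i is dominated by a_ii; if u_i is the only positive
     coordinate, alpha_k u = a_ki u_i < a_ii u_i = 1, and if some l <> i also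
     has u_l > 0, subtracting the equations alpha_i u = 1 = alpha_l u forces
     u_i below one of the ratios whose maximum defines U_i
     (lemma [exists_ratio_bound]).
   Hence u lies in [0, U^{I_n \ k}] ([equilibrium_in_box]).  The first alternative of (C_k) then
   gives alpha_k u <= alpha_k U^{I_n \ k} < 1 by monotonicity; for the second
   one, the rescaled point u / alpha_k u lies on gamma_k inside the box, yet
   alpha_j of it is 1 / alpha_k u <= 1 for any j with u_j > 0.
   The file first records two facts on [maxseq], then develops, for a fixed
   interaction matrix, the properties of U, of the linear forms alpha_i and of
   equilibria, and ends with the theorem. *)
From HB Require Import structures.
From mathcomp Require Import all_boot all_order all_algebra.
From mathcomp Require Import ring lra.
Import Order.TTheory GRing.Theory Num.Theory.
Local Open Scope ring_scope.

Lemma le_maxseq (R : realFieldType) (s : seq R) (x : R) :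
  x \in s -> x <= maxseq s.
Proof.
rewrite /maxseq; elim: s (head 0 s) => // y s IH idx.
rewrite in_cons big_cons le_max => /orP[/eqP->|/IH->]; by rewrite ?lexx ?orbT.
Qed.

Lemma maxseq_ge0 (R : realFieldType) (s : seq R) :
  (forall x, x \in s -> 0 <= x) -> 0 <= maxseq s.
Proof.
case: s => [|y s] hs; first by rewrite /maxseq big_nil.
apply: (le_trans (hs y (mem_head _ _))); exact/le_maxseq/mem_head.
Qed.

Section LotkaVolterra.

Context {R : realFieldType} {n : nat} {A : 'I_n -> 'I_n -> R}.
Hypothesis hdiag : forall i, 0 < A i i.
Hypothesis hoff : forall i j, i != j -> 0 <= A i j.

Lemma A_ge0 i j : 0 <= A i j.
Proof. by case: (eqVneq i j) => [->|/hoff//]; exact: ltW. Qed.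

(* The ratios whose maximum over (m, l) defines U_i in the generic case. *)
Definition ratio_den (i l m : 'I_n) : R := A i i * A l m - A i m * A l i.
Definition ratio (i l m : 'I_n) : R := (A l m - A i m) / ratio_den i l m.

Lemma ratio_den_gt0 {i l m : 'I_n} :
  A l i < A i i -> A i m < A l m -> 0 < ratio_den i l m.
Proof.
move=> hli hm; rewrite subr_gt0.
have := A_ge0 i m; have := A_ge0 l i; nra.
Qed.

Lemma ratio_ge0 {i l m : 'I_n} :
  A l i < A i i -> A i m < A l m -> 0 <= ratio i l m.
Proof.
move=> hli hm; apply: divr_ge0; first by rewrite subr_ge0 ltW.
exact/ltW/(ratio_den_gt0 hli hm).
Qed.

Lemma column_dominated i :
  ~~ [exists j, (j != i) && ((A i i <= A j i) || (A i j == 0))] ->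
  forall j, j != i -> A j i < A i i.
Proof.
by move/existsPn=> h j ji; have := h j; rewrite ji negb_or -ltNge => /andP[].
Qed.

Lemma U_ge0 i : 0 <= U A i.
Proof.
rewrite /U /Ucomp; case: ifP => h1; first by rewrite invr_ge0 ltW.
case: ifP => // _; apply: maxseq_ge0 => x /mapP[[m l]].
rewrite mem_enum inE /= => /andP[/andP[_ li] hm] ->.
exact: ratio_ge0 (column_dominated _ (negbT h1) _ li) hm.
Qed.

Lemma ratio_le_U {i l m : 'I_n} :
  ~~ [exists j, (j != i) && ((A i i <= A j i) || (A i j == 0))] ->
  ~~ ([forall j, (j != i) ==> (A j i < A i i)] &&
      [forall j, forall k, ((j != i) && (k != i)) ==> (A j k <= A i k)]) ->
  m != i -> l != i -> A i m < A l m -> ratio i l m <= U A i.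
Proof.
move=> h1 h2 mi li hm; rewrite /U /Ucomp (negbTE h1) (negbTE h2).
by apply: le_maxseq; apply/mapP; exists (m, l); rewrite // mem_enum inE /= mi li.
Qed.

Lemma alphaxZ j t (x : 'I_n -> R) :
  alphax A j (fun m => t * x m) = t * alphax A j x.
Proof. by rewrite /alphax mulr_sumr; apply: eq_bigr => m _; rewrite mulrCA. Qed.

Lemma alphax_le (j : 'I_n) {x y : 'I_n -> R} :
  (forall m, x m <= y m) -> alphax A j x <= alphax A j y.
Proof. by move=> hxy; apply: ler_sum => m _; rewrite ler_wpM2l ?A_ge0. Qed.

Lemma diag_le_alphax i {u : 'I_n -> R} :
  nonneg u -> A i i * u i <= alphax A i u.
Proof.
move=> hu; rewrite /alphax (bigD1 i) //= lerDl.
by apply: sumr_ge0 => m _; rewrite mulr_ge0 ?A_ge0.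
Qed.

Lemma alphax_lt k i (u : 'I_n -> R) :
  (forall m, m != i -> A k m * u m <= A i m * u m) ->
  A k i * u i < A i i * u i -> alphax A k u < alphax A i u.
Proof.
move=> hle hlt; rewrite /alphax (bigD1 i) //= [X in _ < X](bigD1 i) //=.
by apply: ltr_leD => //; apply: ler_sum => m /hle.
Qed.

Lemma alphax_gt0_support {k : 'I_n} {u : 'I_n -> R} :
  nonneg u -> 0 < alphax A k u -> exists j, 0 < u j.
Proof.
move=> hu hpos; apply/existsP; apply: contraTT hpos => /existsPn hno.
rewrite -leNgt; apply: sumr_le0 => j _.
by rewrite mulr_ge0_le0 ?A_ge0 // leNgt hno.
Qed.

Lemma equilibrium_alpha1 {b u : 'I_n -> R} {j : 'I_n} :
  (forall i, 0 < b i) -> equilibrium A b u -> 0 < u j -> alphax A j u = 1.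
Proof.
move=> hb [_ heq] uj; have /eqP := heq j.
by rewrite !mulf_eq0 (gt_eqF (hb j)) (gt_eqF uj) /= subr_eq0 => /eqP <-.
Qed.

Lemma alphax_offdiag i (u : 'I_n -> R) :
  \sum_(m | m != i) A i m * u m = alphax A i u - A i i * u i.
Proof. by rewrite /alphax [in RHS](bigD1 i) //= addrC addrK. Qed.

Lemma gap_sum i l (u : 'I_n -> R) :
  alphax A i u = alphax A l u ->
  \sum_(m | m != i) (A l m - A i m) * u m = (A i i - A l i) * u i.
Proof.
move=> hil; have : \sum_m (A l m - A i m) * u m = 0.
  under eq_bigr do rewrite mulrBl.
  by rewrite sumrB -/(alphax A l u) -/(alphax A i u) hil subrr.
rewrite (bigD1 i) //= => /eqP; rewrite addrC addr_eq0 => /eqP ->; ring.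
Qed.

(* The weights (u_i D_m - d_m) u_m, with d_m = a_lm - a_im and D_m the
   denominator of [ratio i l m], sum to zero on gamma_i and gamma_l: writing
   them as u_i (a_ii - a_li) a_im u_m - (1 - a_ii u_i) d_m u_m, this follows
   from [alphax_offdiag] and [gap_sum]. *)
Lemma weights_sum0 {i l : 'I_n} {u : 'I_n -> R} :
  alphax A i u = 1 -> alphax A l u = 1 ->
  \sum_(m | m != i) (u i * ratio_den i l m - (A l m - A i m)) * u m = 0.
Proof.
move=> ai al; rewrite (eq_bigr (fun m => u i * (A i i - A l i) * (A i m * u m)
    - (1 - A i i * u i) * ((A l m - A i m) * u m))); last first.
  by move=> m _; rewrite /ratio_den; ring.
rewrite sumrB -!mulr_sumr alphax_offdiag gap_sum ?ai ?al //; ring.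
Qed.

(* Two species i and l lying on their nullclines, with row l losing to row i
   in column i, force u_i below one of the ratios defining U_i: otherwise all
   the weights of [weights_sum0] would be nonnegative, and the one at a
   column m where l beats i and u_m > 0 (which exists by [gap_sum]) positive. *)
Lemma exists_ratio_bound {u : 'I_n -> R} {i l : 'I_n} :
  nonneg u -> l != i -> alphax A i u = 1 -> alphax A l u = 1 ->
  0 < u i -> A l i < A i i ->
  exists2 m, (m != i) && (A i m < A l m) & u i <= ratio i l m.
Proof.
move=> hu li ai al ui hli.
have [|/existsPn hno] := boolP [exists m, [&& m != i, A i m < A l m &
                                                u i <= ratio i l m]].
  by case/existsP=> m /and3P[mi hm hle]; exists m; rewrite ?mi.
exfalso; pose w m := (u i * ratio_den i l m - (A l m - A i m)) * u m.
have w_gt0 m : m != i -> A i m < A l m -> 0 < u m -> 0 < w m.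
  move=> mi hm um; apply: mulr_gt0 => //; rewrite subr_gt0.
  have := hno m; rewrite mi hm /= -ltNge /ratio ltr_pdivrMr //.
  exact: ratio_den_gt0.
have w_ge0 m : m != i -> 0 <= w m.
  move=> mi; have [hm|hm] := ltP (A i m) (A l m).
    have [um|um] := ltP 0 (u m); first exact/ltW/w_gt0.
    have um0 : u m = 0 by apply/le_anti; rewrite um hu.
    by rewrite /w um0 mulr0.
  have diag_u : A i i * u i <= 1 by rewrite -ai diag_le_alphax.
  rewrite /w /ratio_den; apply: mulr_ge0 (hu m).
  have -> : u i * (A i i * A l m - A i m * A l i) - (A l m - A i m)
      = u i * (A i i - A l i) * A i m + (1 - A i i * u i) * (A i m - A l m).
    by ring.
  by apply: addr_ge0; rewrite ?mulr_ge0 ?subr_ge0 ?A_ge0 ?(ltW ui) ?(ltW hli).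
have [m0 /andP[m0i dm0]] : exists m0, (m0 != i) && (0 < (A l m0 - A i m0) * u m0).
  apply/existsP; apply: contraT => /existsPn h.
  have : \sum_(m | m != i) (A l m - A i m) * u m <= 0.
    by apply: sumr_le0 => m mi; have := h m; rewrite mi /= -leNgt.
  by rewrite gap_sum ?ai ?al // leNgt mulr_gt0 // subr_gt0.
have um0 : 0 < u m0.
  by rewrite lt_def hu andbT; apply: contraTneq dm0 => ->; rewrite mulr0 ltxx.
have hm0 : A i m0 < A l m0 by rewrite -subr_gt0 -(pmulr_lgt0 _ um0).
have /eqP := psumr_eq0P w_ge0 (weights_sum0 ai al) m0i.
by rewrite gt_eqF // w_gt0.
Qed.

Lemma equilibrium_le_U {b u : 'I_n -> R} {k i : 'I_n} :
  (forall j, 0 < b j) -> equilibrium A b u ->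
  1 <= alphax A k u -> i != k -> u i <= U A i.
Proof.
move=> hb hu hk ik; have unn := hu.1; have ki : k != i by rewrite eq_sym.
have [ui|ui] := leP (u i) 0; first exact: le_trans ui (U_ge0 i).
have ai := equilibrium_alpha1 hb hu ui.
have absurd : alphax A k u < alphax A i u -> u i <= U A i.
  by rewrite ai ltNge hk.
case h1 : [exists j, (j != i) && ((A i i <= A j i) || (A i j == 0))].
  rewrite /U /Ucomp h1 -[X in _ <= X]mul1r ler_pdivlMr // -ai mulrC.
  exact: diag_le_alphax.
case h2 : ([forall j, (j != i) ==> (A j i < A i i)] &&
           [forall j, forall k, ((j != i) && (k != i)) ==> (A j k <= A i k)]).
  apply: absurd; case/andP: h2 => /forallP hcol /forallP hrow.
  apply: alphax_lt => [m mi|]; last by rewrite ltr_pM2r //; have := hcol k; rewrite ki.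
  by rewrite ler_wpM2r //; have /forallP/(_ m) := hrow k; rewrite ki mi.
have hcol := column_dominated i (negbT h1).
have [/existsP[l /andP[li ul]]|/existsPn hno] := boolP [exists l, (l != i) && (0 < u l)].
  have al := equilibrium_alpha1 hb hu ul.
  have [m /andP[mi hm] hle] := exists_ratio_bound unn li ai al ui (hcol l li).
  exact: le_trans hle (ratio_le_U (negbT h1) (negbT h2) mi li hm).
apply: absurd; apply: alphax_lt => [m mi|]; last by rewrite ltr_pM2r ?hcol.
have um : u m = 0 by apply/le_anti; rewrite unn andbT leNgt; have := hno m; rewrite mi.
by rewrite um !mulr0.
Qed.

Lemma equilibrium_in_box {b u : 'I_n -> R} {k : 'I_n} :
  (forall j, 0 < b j) -> equilibrium A b u -> u k = 0 ->
  1 <= alphax A k u -> in_box (fun _ => 0) (restr (fun i => i != k) (U A)) u.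
Proof.
move=> hb hu uk hk; split; first exact: hu.1.
move=> i; split; first exact: hu.1.
rewrite /restr; case: ifP => [ik|/negbFE/eqP->]; last by rewrite uk.
exact: equilibrium_le_U hb hu hk ik.
Qed.

Lemma in_box_scale {W x : 'I_n -> R} {t : R} :
  0 <= t <= 1 -> in_box (fun _ => 0) W x ->
  in_box (fun _ => 0) W (fun m => t * x m).
Proof.
move=> /andP[t0 t1] [hx hbox]; have tx m : 0 <= t * x m by rewrite mulr_ge0.
split=> // m; split=> //; apply: le_trans (hbox m).2.
exact: ler_piMl.
Qed.

End LotkaVolterra.

Theorem mainTheorem7 (R : realFieldType) (n : nat) (A : 'I_n -> 'I_n -> R)
    (b : 'I_n -> R)
    (hn : (2 <= n)%N)
    (hb : forall i, 0 < b i)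
    (hdiag : forall i, 0 < A i i)
    (hoff : forall i j, i != j -> 0 <= A i j)
    (k : 'I_n) (hC : cond_C A k) :
  forall u : 'I_n -> R, equilibrium A b u -> u k = 0 -> alphax A k u < 1.
Proof.
move=> u hu uk; rewrite ltNge; apply/negP => hk.
have ubox := equilibrium_in_box hdiag hoff hb hu uk hk.
case: hC => [hW|hall].
  have := alphax_le hdiag hoff k (fun i => (ubox.2 i).2).
  by move/(le_trans hk)/(lt_le_trans hW); rewrite ltxx.
(* the rescaled point u / alpha_k u lies on gamma_k inside the box *)
have apos : 0 < alphax A k u := lt_le_trans ltr01 hk.
pose t := (alphax A k u)^-1.
have t01 : 0 <= t <= 1 by rewrite invr_ge0 ltW //= invf_le1.
have [j uj] := alphax_gt0_support hdiag hoff hu.1 apos.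
have jk : j != k by apply: contraTneq uj => ->; rewrite uk ltxx.
have := hall _ (in_box_scale t01 ubox).1 _ (in_box_scale t01 ubox) j jk.
rewrite !alphaxZ mulVf ?gt_eqF // (equilibrium_alpha1 hb hu uj).
by rewrite mulr1 ltNge (andP t01).2 => /(_ erefl).
Qed.
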